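(* In the setting described in the context, assume $N<\infty$ and $n$ is even. Then $$\frac{\sqrt2}4<\sqrt{\frac{(N-2)N^2}{8(N-1)^3}}\le\sigma f\big(\tfrac n2\big),$$ with equality in the second inequality iff $n=2$ or $n=N-2$.
   Context: Standing setting: Binomial law $\mathrm B_{m,p}(\{k\})=\binom mk p^k(1-p)^{m-k}$; hypergeometric law $\mathrm H_{m,r,b}(\{k\})=\binom rk\binom b{m-k}/\binom{r+b}m$ ($r,b\in\mathbb N_0$, $m\in\{0,\dots,r+b\}$, $k\in\mathbb Z$, binomial coefficients with non-integer lower index being $0$). $P$ is a symmetric (about its mean) hypergeometric or symmetric binomial law with mean $\frac n2$ and standard deviation $\sigma>0$, and $f(k)=P(\{k\})$; $N\in\mathbb N\cup\{\infty\}$ is a population size parameter of $P$ (i.e. $N=\infty$ and $P$ binomial, or $P=\mathrm H_{m,r,b}$ for some $r,b,m$ with $r+b=N$). *)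

From mathcomp Require Import all_boot all_order all_algebra.
From mathcomp Require Import reals.
Set Implicit Arguments. Unset Strict Implicit. Unset Printing Implicit Defensive.
Import Order.TTheory GRing.Theory Num.Theory.
Local Open Scope ring_scope.

(* Hypergeometric law H_{m,r,b}: weight of the integer point k (0 <= k <= m) *)
Definition hyp_w {R : realType} (r b m k : nat) : R :=
  (('C(r, k) * 'C(b, m - k))%:R) / ('C(r + b, m))%:R.

(* H_{m,r,b}({x}) for an arbitrary real x (0 off the support {0,..,m}) *)
Definition hyp_pmf {R : realType} (r b m : nat) (x : R) : R :=
  \sum_(k < m.+1) (if x == (k : nat)%:R then hyp_w r b m k else 0).

Definition hyp_mean {R : realType} (r b m : nat) : R :=
  \sum_(k < m.+1) (k : nat)%:R * hyp_w r b m k.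

Definition hyp_var {R : realType} (r b m : nat) : R :=
  \sum_(k < m.+1) ((k : nat)%:R - hyp_mean r b m) ^+ 2 * hyp_w r b m k.

Definition hyp_sd {R : realType} (r b m : nat) : R := Num.sqrt (hyp_var r b m).

From mathcomp Require Import all_boot all_order all_algebra.
From mathcomp Require Import reals.
From mathcomp Require Import ring lra zify.
Import Order.TTheory GRing.Theory Num.Theory.

(* Write f for the mass function, j = n/2 and N = r + b.  Symmetry about the
   mean j forces f(j+1) = f(j-1); together with the ratio
   f(k+1)/f(k) = (r-k)(m-k) / ((k+1)(b-m+k+1)) and the mean rm/N = j this
   leaves only r = b = M, m = 2j and r = 2j, m = M, where N = 2M.  In both
   cases (sigma f(j))^2 = j(M-j)/(2M-1) * (C(M,j)^2 / C(2M,2j))^2, a function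
   of j that is invariant under j |-> M - j and strictly increasing for
   1 <= j <= M/2.  Its minimum, attained exactly at j = 1 and j = M - 1, is
   (M-1)M^2/(2M-1)^3, the square of the constant in the statement, and it
   exceeds 1/8 as soon as N >= 3. *)

Lemma sum_mul_bin_shift (F : nat -> nat) r b m :
  \sum_(k < m.+2) F k * k * 'C(r.+1, k) * 'C(b, m.+1 - k) =
  r.+1 * \sum_(i < m.+1) F i.+1 * 'C(r, i) * 'C(b, m - i).
Proof.
rewrite big_ord_recl /= muln0 !mul0n add0n big_distrr /=.
apply: eq_bigr => i _; rewrite /bump /= add1n subSS.
have := mul_bin_diag r.+1 i => /= H.
rewrite -!mulnA [i.+1 * _]mulnA -H; ring.
Qed.

Lemma Vandermonde_fmoment1 r b m :
  (\sum_(k < m.+1) k * 'C(r, k) * 'C(b, m - k)) * (r + b) = r * m * 'C(r + b, m).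
Proof.
case: r => [|r].
  by rewrite big1 ?mul0n // => -[[|k] ?] _; rewrite ?mul0n ?bin0n ?muln0.
case: m => [|m]; first by rewrite big_ord1 !mul0n muln0.
have := sum_mul_bin_shift (fun=> 1%N) r b m.
under eq_bigr do rewrite mul1n; move=> ->.
under eq_bigr do rewrite mul1n.
rewrite binomial.Vandermonde addSn.
transitivity (r.+1 * ((r + b).+1 * 'C(r + b, m))); first ring.
by rewrite mul_bin_diag; ring.
Qed.

Lemma Vandermonde_fmoment2 r b m :
  (\sum_(k < m.+1) k * (k - 1) * 'C(r, k) * 'C(b, m - k)) * ((r + b) * (r + b - 1)) =
  r * (r - 1) * (m * (m - 1)) * 'C(r + b, m).
Proof.
have [Hr|Hr2] := ltnP r 2.
  rewrite big1 ?mul0n; first by case: r Hr => [|[|]]; rewrite ?mul0n.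
  move=> -[[|[|k]] ?] _ /=; rewrite ?subnn ?muln0 ?mul0n //.
  by rewrite bin_small ?muln0 ?mul0n //; lia.
have [Hm|Hm2] := ltnP m 2.
  rewrite big1 ?mul0n; first by case: m Hm => [|[|]]; rewrite ?mul0n ?muln0.
  move=> -[[|[|k]] ?] _ /=; rewrite ?subnn ?muln0 ?mul0n //; lia.
case: r Hr2 => [|[|r]] // _; case: m Hm2 => [|[|m]] // _.
under eq_bigr => k _ do rewrite (mulnC k).
rewrite (sum_mul_bin_shift (fun k => k - 1)).
rewrite (eq_bigr (fun i : 'I_m.+2 => 1 * i * 'C(r.+1, i) * 'C(b, m.+1 - i))); last first.
  by move=> i _; rewrite subn1 mul1n.
rewrite (sum_mul_bin_shift (fun=> 1%N)); under eq_bigr do rewrite mul1n.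
rewrite binomial.Vandermonde !addSn !subSS !subn0.
transitivity (r.+2 * r.+1 * ((r + b).+2 * ((r + b).+1 * 'C(r + b, m)))); first ring.
rewrite mul_bin_diag.
transitivity (r.+2 * r.+1 * (m.+1 * ((r + b).+2 * 'C((r + b).+1, m.+1)))); first ring.
by rewrite mul_bin_diag; ring.
Qed.

Lemma mul_bin_step r b m k : k < m ->
  'C(r, k.+1) * 'C(b, m - k.+1) * (k.+1 * (b - (m - k.+1))) =
  'C(r, k) * 'C(b, m - k) * ((r - k) * (m - k)).
Proof.
move=> Hk.
have -> : m - k = (m - k.+1).+1 by lia.
transitivity ((k.+1 * 'C(r, k.+1)) * ((b - (m - k.+1)) * 'C(b, m - k.+1))); first ring.
rewrite mul_bin_left -(mul_bin_left b); ring.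
Qed.

Lemma bin_double_swap M j : j <= M ->
  'C(j.*2, j) * 'C(M.*2 - j.*2, M - j) * 'C(M.*2, j.*2) = 'C(M, j) ^ 2 * 'C(M.*2, M).
Proof.
move=> Hj.
have P : 0 < (j`! * (M - j)`!) ^ 2 by rewrite expn_gt0 muln_gt0 !fact_gt0.
apply/eqP; rewrite -(eqn_pmul2r P); apply/eqP.
have A := @bin_fact j.*2 j ltac:(lia).
have B := @bin_fact (M.*2 - j.*2) (M - j) ltac:(lia).
have C := @bin_fact M.*2 j.*2 ltac:(lia).
have D := @bin_fact M j Hj.
have E := @bin_fact M.*2 M ltac:(lia).
have e1 : j.*2 - j = j by lia.
have e2 : M.*2 - j.*2 - (M - j) = M - j by lia.
have e3 : M.*2 - M = M by lia.
rewrite e1 in A; rewrite e2 in B; rewrite e3 in E.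
transitivity ('C(M.*2, j.*2) * (('C(j.*2, j) * (j`! * j`!)) * ('C(M.*2 - j.*2, M - j) * ((M - j)`! * (M - j)`!)))); first ring.
rewrite A B C.
transitivity ('C(M.*2, M) * (('C(M, j) * (j`! * (M - j)`!)) ^ 2)); last by ring.
by rewrite D E.
Qed.

Lemma symmetric_hyp_params r b m j :
  0 < r -> 0 < b -> 0 < m -> m < r + b -> j * (r + b) = r * m ->
  'C(r, j.+1) * 'C(b, m - j.+1) = 'C(r, j.-1) * 'C(b, m - j.-1) ->
  (r = b /\ m = j.*2) \/ (r = j.*2 /\ r + b = m.*2).
Proof.
move=> Hr Hb Hm HmN Ej Hw.
(* The mean gives jB = XY and the two ratio steps around j give
   (j+1)(B+1) = (X+1)(Y+1), so {j, B} = {X, Y}. *)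
have [X [Y [B [Er Em Eb]]]] : exists X Y B, [/\ r = X + j, m = Y + j & b = B + Y].
  by exists (r - j), (m - j), (b - (m - j)); split; nia.
have [i Ei] : exists i, j = i.+1 by exists j.-1; nia.
have [HX HY] : 0 < X /\ 0 < Y by split; nia.
have EjB : j * B = X * Y by nia.
have Eup := mul_bin_step r b m j ltac:(lia).
have Edown := mul_bin_step r b m i ltac:(lia).
rewrite Hw Ei /= -Ei in Eup; rewrite -Ei in Edown.
have Hv : 0 < 'C(r, j) * 'C(b, m - j) by rewrite muln_gt0 !bin_gt0; lia.
set u := 'C(r, i) * 'C(b, m - i) in Eup Edown.
set v := 'C(r, j) * 'C(b, m - j) in Hv Eup Edown.
clearbody u v.
have [e1 e2 e3] : [/\ b - (m - j.+1) = B.+1, r - j = X & m - j = Y] by split; lia.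
have [e4 e5 e6] : [/\ b - (m - j) = B, r - i = X.+1 & m - i = Y.+1] by split; lia.
rewrite e1 e2 e3 in Eup; rewrite e4 e5 e6 in Edown.
have Hu : 0 < u.
  rewrite lt0n; apply/eqP => u0.
  have : 0 < v * (X * Y) by rewrite !muln_gt0 Hv HX HY.
  by rewrite -Eup u0 !mul0n.
have Eprod : j.+1 * B.+1 = X.+1 * Y.+1.
  have HXY : 0 < u * v * (X * Y) by rewrite !muln_gt0 Hu Hv HX HY.
  apply/eqP; rewrite -(eqn_pmul2r HXY); apply/eqP.
  transitivity ((u * (j.+1 * B.+1)) * (v * (j * B))); first by rewrite EjB; ring.
  by rewrite Eup Edown; ring.
have Esum : j + B = X + Y by clear -Eprod EjB; nia.
have : ((Posz j - Posz X) * (Posz j - Posz Y) = 0)%R.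
  have SZ : (Posz B = Posz X + Posz Y - Posz j)%R by rewrite -PoszD -Esum PoszD; ring.
  have PZ : (Posz j * Posz B = Posz X * Posz Y)%R by rewrite -!PoszM EjB.
  transitivity (Posz j * Posz j - Posz j * (Posz X + Posz Y) + Posz X * Posz Y)%R; first ring.
  by rewrite -PZ SZ; ring.
move/eqP; rewrite mulf_eq0 !subr_eq0 => /orP [/eqP [EX]|/eqP [EY]].
- by right; split; lia.
- by left; split; lia.
Qed.

Lemma mean_index_bounds r b m j :
  0 < r -> 0 < b -> 0 < m -> j * (r + b) = r * m -> 0 < j < m.
Proof.
move=> Hr Hb Hm Ej.
have : 0 < j * (r + b) by rewrite Ej muln_gt0 Hr Hm.
rewrite muln_gt0 => /andP[-> _] /=.
rewrite -(ltn_pmul2r (ltn_addr b Hr)) Ej mulnC ltn_pmul2l //.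
by rewrite -{1}[r]addn0 ltn_add2l.
Qed.

Lemma bin2_double M : 'C(M.*2, 2) = M * (M.*2 - 1).
Proof. by rewrite bin2 -subn1 -doubleMl half_double. Qed.

Lemma bin_double_succ M i : 'C(M.*2, i.*2.+2) * (i.*2.+2 * i.*2.+1) =
  'C(M.*2, i.*2) * ((M.*2 - i.*2) * (M.*2 - i.*2.+1)).
Proof.
transitivity (i.*2.+1 * (i.*2.+2 * 'C(M.*2, i.*2.+2))); first ring.
rewrite mul_bin_left.
transitivity ((M.*2 - i.*2.+1) * (i.*2.+1 * 'C(M.*2, i.*2.+1))); first ring.
rewrite mul_bin_left; ring.
Qed.

Local Open Scope ring_scope.

Lemma natr_double (R : pzSemiRingType) n : (n.*2)%:R = 2 * n%:R :> R.
Proof. by rewrite -addnn natrD mulr_natl mulr2n. Qed.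

Section CentralMass.
Variables (R : realFieldType) (M : nat).

(* The mass at the centre j, the variance and their combination sigma^2 f(j)^2
   shared by the two symmetric laws H_{2j,M,M} and H_{M,2j,2M-2j}. *)
Definition central_mass (j : nat) : R := ('C(M, j) ^ 2)%:R / ('C(M.*2, j.*2))%:R.
Definition central_var (j : nat) : R := j%:R * (M%:R - j%:R) / (2 * M%:R - 1).
Definition central_sd_mass2 (j : nat) : R := central_var j * central_mass j ^+ 2.

Lemma central_mass_gt0 j : (j <= M)%N -> 0 < central_mass j.
Proof.
by move=> Hj; apply: divr_gt0; rewrite ltr0n ?expn_gt0 bin_gt0 ?leq_double ?Hj.
Qed.

Lemma central_sd_mass2_gt0 j : (0 < j < M)%N -> 0 < central_sd_mass2 j.
Proof.
case/andP=> Hj0 HjM; apply: mulr_gt0; last by rewrite exprn_gt0 // central_mass_gt0 // ltnW.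
have hj : 1 <= j%:R :> R by rewrite ler1n.
have hM : j%:R + 1 <= M%:R :> R by rewrite natr1 ler_nat.
apply: divr_gt0; [apply: mulr_gt0|]; lra.
Qed.

Lemma central_sd_mass2_sym j : (j <= M)%N -> central_sd_mass2 (M - j) = central_sd_mass2 j.
Proof.
move=> Hj; rewrite /central_sd_mass2 /central_var /central_mass bin_sub // doubleB.
by rewrite bin_sub ?leq_double // natrB //; congr (_ * _); ring.
Qed.

Lemma central_mass_succ i : (i < M)%N ->
  central_mass i.+1 * ((i%:R + 1) * (2 * M%:R - 2 * i%:R - 1)) =
  central_mass i * ((M%:R - i%:R) * (2 * i%:R + 1)).
Proof.
move=> HiM; set x : R := i%:R; set y : R := M%:R.
have hx : 0 <= x by rewrite ler0n.
have hy : x + 1 <= y by rewrite natr1 ler_nat.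
have Ed : ('C(M, i.+1))%:R * (x + 1) = ('C(M, i))%:R * (y - x) :> R.
  by rewrite /x /y natr1 -natrB 1?ltnW // -!natrM [in LHS]mulnC mul_bin_left mulnC.
have Ee : ('C(M.*2, i.*2.+2))%:R * ((2 * x + 2) * (2 * x + 1)) =
          ('C(M.*2, i.*2))%:R * ((2 * y - 2 * x) * (2 * y - 2 * x - 1)) :> R.
  have := congr1 (fun k => k%:R : R) (bin_double_succ M i).
  rewrite !natrM !natrB ?leq_double 1?ltnW //; last by rewrite -doubleS leq_double.
  rewrite -[(i.*2.+2)%:R]natr1 -[(i.*2.+1)%:R]natr1 !natr_double -/x -/y => E.
  transitivity (('C(M.*2, i.*2.+2))%:R * ((2 * x + 1 + 1) * (2 * x + 1)) : R); first ring.
  by rewrite E; ring.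
have ePos : 0 < ('C(M.*2, i.*2))%:R :> R by rewrite ltr0n bin_gt0 leq_double ltnW.
have Ed' : ('C(M, i.+1))%:R = ('C(M, i))%:R * (y - x) / (x + 1) :> R.
  by rewrite -Ed mulfK //; lra.
have Ee' : ('C(M.*2, i.*2.+2))%:R = ('C(M.*2, i.*2))%:R *
    ((2 * y - 2 * x) * (2 * y - 2 * x - 1)) / ((2 * x + 2) * (2 * x + 1)) :> R.
  by rewrite -Ee mulfK //; apply/lt0r_neq0; nra.
rewrite /central_mass !natrX Ed' Ee'; field.
by rewrite -/x -/y (lt0r_neq0 ePos) /=; repeat (apply/andP; split); apply/lt0r_neq0; lra.
Qed.

Lemma central_sd_mass2_lt_succ i : (0 < i)%N -> (i.*2.+2 <= M)%N ->
  central_sd_mass2 i < central_sd_mass2 i.+1.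
Proof.
move=> Hi HM; set x : R := i%:R; set y : R := M%:R.
have hx : 1 <= x by rewrite ler1n.
have hy : 2 * x + 2 <= y.
  have : (i.*2.+2)%:R <= y by rewrite ler_nat.
  by rewrite -!natr1 natr_double -/x; lra.
set A := (x + 1) * (2 * y - 2 * x - 1); set B := (y - x) * (2 * x + 1).
have Hstep : central_mass i.+1 * A = central_mass i * B by apply: central_mass_succ; lia.
have HA : 0 < A ^+ 2 by rewrite exprn_gt0 // /A; nra.
have Hm : 0 < central_mass i ^+ 2 by rewrite exprn_gt0 // central_mass_gt0 //; lia.
have E : (central_sd_mass2 i.+1 - central_sd_mass2 i) * A ^+ 2 =
    central_mass i ^+ 2 * ((x + 1) * (y - x) * (y - 2 * x - 1) * y / (2 * y - 1)).
  transitivity (central_var i.+1 * (central_mass i.+1 * A) ^+ 2 - central_var i * central_mass i ^+ 2 * A ^+ 2).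
    by rewrite /central_sd_mass2; ring.
  rewrite Hstep /central_var -natr1 -/x -/y /A /B; field; lra.
rewrite -subr_gt0 -(pmulr_lgt0 _ HA) E; apply: mulr_gt0 => //.
by apply: divr_gt0; [rewrite -mulrA; apply: mulr_gt0; nra|lra].
Qed.

Lemma central_sd_mass2_ge1 j : (0 < j)%N -> (j.*2 <= M)%N ->
  central_sd_mass2 1 <= central_sd_mass2 j /\ ((1 < j)%N -> central_sd_mass2 1 < central_sd_mass2 j).
Proof.
elim: j => [//|[|k] IH] _ HM; first by split.
have [IH1 _] := IH isT ltac:(lia).
have HkM : (k.+1.*2.+2 <= M)%N by lia.
have Hlt := le_lt_trans IH1 (central_sd_mass2_lt_succ k.+1 isT HkM).
by split => //; apply: ltW.
Qed.

Lemma central_sd_mass2_min j : (0 < j < M)%N ->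
  central_sd_mass2 1 <= central_sd_mass2 j /\
  (central_sd_mass2 1 = central_sd_mass2 j <-> (j = 1 \/ j = M - 1)%N).
Proof.
case/andP=> Hj0 HjM.
have sym1 : central_sd_mass2 (M - 1) = central_sd_mass2 1 by rewrite central_sd_mass2_sym //; lia.
have [Hj|Hj] := leqP j.*2 M.
  have [Hle Hlt] := central_sd_mass2_ge1 j Hj0 Hj.
  split => //; split => [E|[] E].
  - by case: (ltnP 1 j) => Hj1; [have := Hlt Hj1; rewrite E ltxx | left; lia].
  - by rewrite E.
  - by have -> : j = 1%N by lia.
have symj : central_sd_mass2 (M - j) = central_sd_mass2 j by rewrite central_sd_mass2_sym //; lia.
have [Hle Hlt] := central_sd_mass2_ge1 (M - j) ltac:(lia) ltac:(lia).
rewrite -symj; split => //; split => [E|[] E].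
- by case: (ltnP 1 (M - j)) => Hj1; [have := Hlt Hj1; rewrite E ltxx | right; lia].
- lia.
- by rewrite E subKn ?sym1 //; lia.
Qed.

Lemma central_sd_mass2_1 : (0 < M)%N ->
  central_sd_mass2 1 = (M%:R - 1) * M%:R ^+ 2 / (2 * M%:R - 1) ^+ 3.
Proof.
move=> HM; have hy : 1 <= M%:R :> R by rewrite ler1n.
have B : ('C(M.*2, 2))%:R = M%:R * (2 * M%:R - 1) :> R.
  by rewrite bin2_double natrM natrB ?natr_double // -muln2 -[1%N]/(1 * 1)%N leq_mul.
rewrite /central_sd_mass2 /central_var /central_mass bin1 B natrX; field.
by apply/andP; split; apply/lt0r_neq0; lra.
Qed.
End CentralMass.

Lemma sqrt2_div4_lt (R : rcfType) (N : R) : 3 <= N ->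
  Num.sqrt 2 / 4 < Num.sqrt ((N - 2) * N ^+ 2 / (8 * (N - 1) ^+ 3)).
Proof.
move=> HN.
have -> : Num.sqrt 2 / 4 = Num.sqrt (2 / 16) :> R.
  rewrite sqrtrM // (_ : 16^-1 = 4^-1 ^+ 2 :> R); last by rewrite exprVn; congr (_^-1); ring.
  by rewrite sqrtr_sqr ger0_norm // invr_ge0.
have Hd : 0 < 8 * (N - 1) ^+ 3 by rewrite mulr_gt0 // exprn_gt0 //; lra.
rewrite ltr_sqrt; last by apply: divr_gt0 => //; nra.
rewrite ltr_pdivlMr // -subr_gt0.
have -> : (N - 2) * N ^+ 2 - 2 / 16 * (8 * (N - 1) ^+ 3) = N * (N - 3) + 1 by field.
nra.
Qed.

Lemma central_sd_mass_bound (R : rcfType) (M j : nat) : (0 < j < M)%N ->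
  let N : R := (M.*2)%:R in
  let c := Num.sqrt ((N - 2) * N ^+ 2 / (8 * (N - 1) ^+ 3)) in
  c <= Num.sqrt (central_var R M j) * central_mass R M j /\
  (c = Num.sqrt (central_var R M j) * central_mass R M j <-> (j = 1 \/ j = M - 1)%N).
Proof.
move=> HjM N c; rewrite {}/c; have /andP[Hj0 HjM'] := HjM.
have hy : 2 <= M%:R :> R by rewrite ler_nat; lia.
have Hvar : 0 <= central_var R M j.
  have hj : j%:R + 1 <= M%:R :> R by rewrite natr1 ler_nat.
  by apply: divr_ge0; [apply: mulr_ge0|]; rewrite ?ler0n //; lra.
have Hmass : 0 <= central_mass R M j by rewrite ltW // central_mass_gt0 // ltnW.
have -> : Num.sqrt (central_var R M j) * central_mass R M j = Num.sqrt (central_sd_mass2 R M j).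
  by rewrite /central_sd_mass2 (sqrtrM _ Hvar) sqrtr_sqr ger0_norm.
have -> : (N - 2) * N ^+ 2 / (8 * (N - 1) ^+ 3) = central_sd_mass2 R M 1.
  by rewrite /N natr_double central_sd_mass2_1 ?(ltn_trans Hj0) //; field; lra.
have G1 : 0 < central_sd_mass2 R M 1 by apply: central_sd_mass2_gt0; lia.
have [Hle Heq] := central_sd_mass2_min R M j HjM.
have Gj : 0 < central_sd_mass2 R M j by exact: central_sd_mass2_gt0.
rewrite ler_sqrt ?(ltW Gj) //; split => //.
by rewrite -Heq; split => [/eqP|->//]; rewrite eqr_sqrt ?ltW // => /eqP.
Qed.

Lemma natr_mul_subn1 (R : pzRingType) k : (k * (k - 1))%:R = k%:R * (k%:R - 1) :> R.
Proof. by case: k => [|k]; rewrite ?mul0n ?mul0r // natrM subn1 /= -natr1 addrK. Qed.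

Lemma hyp_pmf_nat (R : realType) r b m k : (k <= m)%N ->
  hyp_pmf (R := R) r b m k%:R = hyp_w r b m k.
Proof.
move=> Hk; rewrite /hyp_pmf (bigD1 (Ordinal (Hk : (k < m.+1)%N))) //= eqxx.
rewrite big1 ?addr0 // => i Hi; rewrite eqr_nat; case: eqP => // E.
by move: Hi; rewrite -val_eqE /= E eqxx.
Qed.

Lemma hyp_w_eq (R : realType) r b m k k' : (m <= r + b)%N ->
  hyp_w (R := R) r b m k = hyp_w r b m k' ->
  ('C(r, k) * 'C(b, m - k) = 'C(r, k') * 'C(b, m - k'))%N.
Proof.
move=> Hm; rewrite /hyp_w => /(mulIf _) E.
by apply/eqP; rewrite -(eqr_nat R) E // invr_neq0 // pnatr_eq0 -lt0n bin_gt0.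
Qed.

Section HypMoments.
Variables (R : realType) (r b m : nat).
Hypothesis Hm : (m <= r + b)%N.

Lemma sum_hyp_w (F : nat -> R) :
  \sum_(k < m.+1) F k * hyp_w r b m k =
  (\sum_(k < m.+1) F k * ('C(r, k) * 'C(b, m - k))%:R) / ('C(r + b, m))%:R.
Proof. by rewrite mulr_suml; apply: eq_bigr => k _; rewrite /hyp_w mulrA. Qed.

Let binN_neq0 : ('C(r + b, m))%:R != 0 :> R.
Proof. by rewrite pnatr_eq0 -lt0n bin_gt0. Qed.

Lemma hyp_w_sum1 : \sum_(k < m.+1) hyp_w (R := R) r b m k = 1.
Proof.
under eq_bigr do rewrite -[hyp_w _ _ _ _]mul1r.
rewrite (sum_hyp_w (fun=> 1)); under eq_bigr do rewrite mul1r.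
by rewrite -natr_sum binomial.Vandermonde divff.
Qed.

Lemma hyp_mean_mulN : hyp_mean (R := R) r b m * (r + b)%:R = (r * m)%:R.
Proof.
rewrite /hyp_mean (sum_hyp_w (fun k => k%:R)); under eq_bigr do rewrite -natrM mulnA.
by rewrite -natr_sum mulrAC -natrM Vandermonde_fmoment1 natrM mulfK.
Qed.

Let fmoment2 := \sum_(k < m.+1) (k%:R * (k%:R - 1)) * hyp_w (R := R) r b m k.

Lemma hyp_fmoment2_mulN :
  fmoment2 * ((r + b)%:R * ((r + b)%:R - 1)) = r%:R * (r%:R - 1) * (m%:R * (m%:R - 1)).
Proof.
rewrite /fmoment2 (sum_hyp_w (fun k => k%:R * (k%:R - 1))) -!natr_mul_subn1.
under eq_bigr do rewrite -natr_mul_subn1 -natrM !mulnA.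
by rewrite -natr_sum mulrAC -!natrM Vandermonde_fmoment2 natrM mulfK.
Qed.

Lemma hyp_var_moments : hyp_var (R := R) r b m = fmoment2 + hyp_mean r b m - hyp_mean r b m ^+ 2.
Proof.
set A1 := hyp_mean r b m.
transitivity (fmoment2 + (1 - 2 * A1) * (\sum_(k < m.+1) (k : nat)%:R * hyp_w (R := R) r b m k)
  + A1 ^+ 2 * \sum_(k < m.+1) hyp_w (R := R) r b m k).
  rewrite /hyp_var /fmoment2 (mulr_sumr _ _ _ (1 - 2 * A1)) (mulr_sumr _ _ _ (A1 ^+ 2)).
  by rewrite -!big_split /=; apply: eq_bigr => k _; rewrite /A1; ring.
have -> : \sum_(k < m.+1) (k : nat)%:R * hyp_w (R := R) r b m k = A1 by [].
by rewrite hyp_w_sum1; ring.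
Qed.

Lemma hyp_var_mulN : hyp_var (R := R) r b m * ((r + b)%:R ^+ 2 * ((r + b)%:R - 1)) =
  m%:R * r%:R * b%:R * ((r + b)%:R - m%:R).
Proof.
have E1 := hyp_mean_mulN; have E2 := hyp_fmoment2_mulN.
rewrite hyp_var_moments.
set N : R := (r + b)%:R in E1 E2 *; set a1 := hyp_mean r b m in E1 *.
transitivity ((fmoment2 * (N * (N - 1))) * N + (a1 * N) * (N * (N - 1)) - (a1 * N) ^+ 2 * (N - 1)).
  by ring.
by rewrite E2 E1 natrM /N natrD; ring.
Qed.

End HypMoments.

Lemma hyp_var_small (R : realType) r b m : (m <= r + b)%N -> (r + b <= 1)%N ->
  hyp_var (R := R) r b m = 0.
Proof.
move=> Hm HN; rewrite hyp_var_moments //.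
have -> : \sum_(k < m.+1) (k%:R * (k%:R - 1)) * hyp_w (R := R) r b m k = 0.
  apply: big1 => [[k Hk]] _ /=; have : (k <= 1)%N by lia.
  by case: k {Hk} => [|[|]] //= _; rewrite ?mul0r // subrr mulr0 mul0r.
rewrite add0r; case: m Hm => [|[|m']] Hm'; last lia.
- by rewrite /hyp_mean big_ord1 /= mul0r expr0n /= subrr.
- have := hyp_mean_mulN R r b 1 Hm'; rewrite (_ : r + b = 1)%N; last lia.
  rewrite mulr1 => ->; have : (r * 1 <= 1)%N by lia.
  by case: (r * 1)%N => [|[|]] //= _; rewrite ?expr0n ?expr1n subrr.
Qed.

Lemma hyp_sd_gt0_params (R : realType) r b m : (m <= r + b)%N ->
  0 < hyp_sd (R := R) r b m -> [/\ 0 < r, 0 < b, 0 < m & m < r + b]%N.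
Proof.
move=> Hm; rewrite sqrtr_gt0 => Hv.
have HN : (2 <= r + b)%N.
  by rewrite leqNgt; apply/negP => /(@hyp_var_small R r b m Hm) E; rewrite E ltxx in Hv.
have : 0 < m%:R * r%:R * b%:R * ((r + b)%:R - m%:R) :> R.
  have hN : 2 <= (r + b)%:R :> R by rewrite ler_nat.
  by rewrite -hyp_var_mulN //; apply: mulr_gt0 => //; apply: mulr_gt0; [apply: exprn_gt0|]; lra.
by rewrite -natrB // -!natrM ltr0n !muln_gt0 subn_gt0 => /andP[/andP[/andP[-> ->] ->] ->].
Qed.

Lemma hyp_sd_central (R : realType) r b m M j :
  (m <= r + b)%N -> (r + b = M.*2)%N -> (0 < M)%N -> (j <= M)%N ->
  (m * r * b * (r + b - m) = 4 * M ^ 2 * (j * (M - j)))%N ->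
  hyp_sd (R := R) r b m = Num.sqrt (central_var R M j).
Proof.
move=> Hm HN HM HjM Hprod; congr Num.sqrt.
have := hyp_var_mulN R r b m Hm.
rewrite -natrB // -!natrM Hprod HN natr_double !natrM natrB //.
have hy : 1 <= M%:R :> R by rewrite ler1n.
move=> E; apply: (mulIf (x := (2 * M%:R) ^+ 2 * (2 * M%:R - 1))).
  by apply/lt0r_neq0; apply: mulr_gt0; [apply: exprn_gt0|]; lra.
by rewrite E /central_var; field; apply/lt0r_neq0; lra.
Qed.

Lemma hyp_pmf_central_balanced (R : realType) M j :
  hyp_pmf (R := R) M M j.*2 j%:R = central_mass R M j.
Proof.
rewrite hyp_pmf_nat; last by rewrite -addnn leq_addr.
by rewrite /hyp_w /central_mass -addnn addnK mulnn !addnn.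
Qed.

Lemma hyp_pmf_central_half_sample (R : realType) M j : (j <= M)%N ->
  hyp_pmf (R := R) j.*2 (M.*2 - j.*2) M j%:R = central_mass R M j.
Proof.
move=> Hj; rewrite hyp_pmf_nat // /hyp_w /central_mass subnKC ?leq_double //.
have HM2 : (M <= M.*2)%N by rewrite -addnn leq_addr.
apply/eqP; rewrite eqr_div ?pnatr_eq0 -?lt0n ?bin_gt0 ?leq_double ?HM2 //.
by rewrite -!natrM eqr_nat -bin_double_swap.
Qed.

Lemma symmetric_hyp_central (R : realType) r b m j : (m <= r + b)%N ->
  [/\ 0 < r, 0 < b, 0 < m & m < r + b]%N -> (j * (r + b) = r * m)%N ->
  ('C(r, j.+1) * 'C(b, m - j.+1) = 'C(r, j.-1) * 'C(b, m - j.-1))%N ->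
  exists M, [/\ (r + b = M.*2)%N, (0 < j < M)%N,
    hyp_sd (R := R) r b m = Num.sqrt (central_var R M j) &
    hyp_pmf (R := R) r b m j%:R = central_mass R M j].
Proof.
move=> Hm [Hr Hb Hm0 HmN] Ej Hw.
case: (symmetric_hyp_params r b m j Hr Hb Hm0 HmN Ej Hw) => [[Erb Emj]|[Erj HN]].
- subst b m; exists r; split; [by rewrite addnn | lia | |].
    by apply: hyp_sd_central; rewrite ?addnn //; lia.
  exact: hyp_pmf_central_balanced.
- have Eb : b = (m.*2 - j.*2)%N by lia.
  subst r b; exists m; split; [lia | lia | |].
    by apply: hyp_sd_central => //; lia.
  by apply: hyp_pmf_central_half_sample; lia.
Qed.

Theorem lemma4p2 (R : realType) (r b m : nat) (n : R) :
  (m <= r + b)%N ->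
  hyp_mean r b m = n / 2 ->
  (forall x : R, hyp_pmf r b m x = hyp_pmf r b m (n - x)) ->
  0 < hyp_sd (R := R) r b m ->
  (exists j : nat, n = (2 * j)%:R) ->
  let N : R := (r + b)%:R in
  let c : R := Num.sqrt ((N - 2) * N ^+ 2 / (8 * (N - 1) ^+ 3)) in
  Num.sqrt 2 / 4 < c /\
  c <= hyp_sd r b m * hyp_pmf r b m (n / 2) /\
  (c = hyp_sd r b m * hyp_pmf r b m (n / 2) <-> (n = 2 \/ n = N - 2)).
Proof.
move=> Hm Hmean Hsym Hsd [j Hn] N c.
have Hpar := hyp_sd_gt0_params R r b m Hm Hsd; have [Hr Hb Hm0 _] := Hpar.
have Hn2 : n / 2 = j%:R by rewrite Hn natrM; field.
have Ej : (j * (r + b) = r * m)%N.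
  by have := hyp_mean_mulN R r b m Hm; rewrite Hmean Hn2 -natrM => /eqP; rewrite eqr_nat => /eqP.
have /andP[Hj0 Hjm] := mean_index_bounds r b m j Hr Hb Hm0 Ej.
have Hw : ('C(r, j.+1) * 'C(b, m - j.+1) = 'C(r, j.-1) * 'C(b, m - j.-1))%N.
  apply: (hyp_w_eq R r b m _ _ Hm).
  rewrite -!hyp_pmf_nat; [|lia|lia].
  rewrite Hsym Hn -natrB; last lia.
  by congr (hyp_pmf _ _ _ _%:R); lia.
have [M [HN HjM Hsd' Hpmf]] := symmetric_hyp_central R r b m j Hm Hpar Ej Hw.
have [Hc Hiff] := central_sd_mass_bound R M j HjM.
rewrite /c /N HN Hn2 Hsd' Hpmf; split; [apply: sqrt2_div4_lt; rewrite ler_nat; lia | split => //].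
rewrite Hiff Hn -natrB; last lia.
split=> [[] ->|[] /eqP]; rewrite ?eqr_nat.
- by left.
- by right; congr _%:R; lia.
- by move/eqP; left; lia.
- by move/eqP; right; lia.
Qed.
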